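(* Let $\big(Z,\psi^{(z)},(I^{(z)}_{A},\phi^{(z)}_{A})_{A\in P_{\mathbb A}}\big)$ and $\big(C,\psi^{(c)},(I^{(c)}_{A},\phi^{(c)}_{A})_{A\in P_{\mathbb A}}\big)$ be minimal action-induced representations (minAIRs) of the same family $\{D_A\}_{A\in P_{\mathbb A}}$, with $Z\subseteq\mathbb R^{d_Z}$, $C\subseteq\mathbb R^{d_C}$. Let $Z|_{\mathrm{patch}}\subseteq Z$ be convex and open in $\mathbb R^{d_Z}$. Let $\mathcal A\subseteq P_{\mathbb A}$ be a nonempty set of allowed action combinations, $I^{(z)}_O:=\bigcap_{A\in\mathcal A}I^{(z)}_A$, $\pi^{(z)}_O(z)=z_O:=(z_j)_{j\in I^{(z)}_O}$, $Z_O=\{\pi^{(z)}_O(z):z\in Z\}$, and analogously $I^{(c)}_O$, $\pi^{(c)}_O$, $C_O$. Put $Z_O|_{\mathrm{patch}}:=\pi^{(z)}_O(Z|_{\mathrm{patch}})$ and $Z_A|_{\mathrm{patch}}:=\pi^{(z)}_A(Z|_{\mathrm{patch}})$. Define $g_O$ on $Z_O|_{\mathrm{patch}}$ by $$g_O=\pi^{(c)}_O\circ(\phi^{(c)}_A)^{-1}\circ\phi^{(z)}_A\circ i_A,$$ where $A\in\mathcal A$ and $i_A$ maps $z_O$ to some $z_A\in Z_A|_{\mathrm{patch}}$ with $\pi^{(z)}_O(z_A)=z_O$ (here $\pi^{(z)}_O$, $\pi^{(c)}_O$ are applied to vectors indexed by $I_A\supseteq I_O$ by selecting the coordinates in $I_O$),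 and let $C_O|_{\mathrm{patch}}$ be the image of $g_O$. Then $g_O:Z_O|_{\mathrm{patch}}\to C_O|_{\mathrm{patch}}$ is well-defined, i.e. independent of the choice of $A\in\mathcal A$ and of the embedding $i_A$; it is surjective and continuous (with respect to subspace topologies of the embedding Euclidean spaces); and $C_O|_{\mathrm{patch}}$ is path-connected. If additionally $C|_{\mathrm{patch}}\subseteq C_{\mathrm{conv}}\subseteq C$ for some convex subset $C_{\mathrm{conv}}$ that is open in $\mathbb R^{d_C}$, then $g_O$ is a homeomorphism from $Z_O|_{\mathrm{patch}}$ onto $C_O|_{\mathrm{patch}}$ (continuous, invertible, with continuous inverse), and $C_O|_{\mathrm{patch}}$ is open.
   Context: Setting. $X\subseteq\mathbb R^{d_x}$ is a continuous manifold (input data), $\mathbb A=\{1,\dots,n_{\mathbb A}\}$ a finite set of elementary actions, $P_{\mathbb A}\subseteq\mathcal P(\mathbb A)$ the allowed action combinations. For each $A\in P_{\mathbb A}$ there is a deterministic map $y_A:X\to Y_A\subseteq\mathbb R^{d_{Y_A}}$ with $Y_A$ a continuous manifold; $D_A=\{(x,y_A(x)):x\in X\}$. AIR. Given a continuous manifold $Z\subseteq\mathbb R^{d_Z}$, index sets $I_A\subseteq\{1,\dots,d_Z\}$, projections $\pi_A(z)=z_A:=(z_i)_{i\in I_A}$ onto $Z_A=\{(z_i)_{i\in I_A}:z\in Z\}$, and continuous maps $\psi:X\to Z$, $\phi_A:Z_A\to Y_A$ with $\phi_A\circ\pi_A\circ\psi=y_A$ on $X$ for all $A\in P_{\mathbb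 A}$, the tuple $\big(Z,\psi,(I_A,\phi_A)_{A\in P_{\mathbb A}}\big)$ is an action-induced representation (AIR). minAIR. An AIR is minimal if $\psi$ is surjective, $d_Z=\big|\bigcup_{A\in P_{\mathbb A}}I_A\big|$, every $\phi_A$ is invertible with continuous inverse, and $Z$ is open in $\mathbb R^{d_Z}$ (with the subspace topology). $C|_{\mathrm{patch}}$ denotes the set of $c\in C$ that correspond to some $z\in Z|_{\mathrm{patch}}$, i.e. satisfy $\phi^{(c)}_A(\pi^{(c)}_A(c))=\phi^{(z)}_A(\pi^{(z)}_A(z))$ for all $A\in P_{\mathbb A}$. *)

From HB Require Import structures.
From mathcomp Require Import all_boot all_order all_algebra.
From mathcomp Require Import all_classical all_reals.
From mathcomp Require Import all_analysis.
Set Implicit Arguments. Unset Printing Implicit Defensive.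
Import Order.TTheory GRing.Theory Num.Theory.
Local Open Scope classical_set_scope.
Local Open Scope ring_scope.

Import numFieldNormedType.Exports.

Section AIR.
Variable R : realType.

(* Euclidean space R^n is 'rV[R]_n (with its product/normed topology). *)

Definition homeo_on (T U : topologicalType) (A : set T) (B : set U)
    (f : T -> U) : Prop :=
  (forall x, A x -> B (f x)) /\ {within A, continuous f} /\
  exists g : U -> T,
    [/\ forall y, B y -> A (g y),
        forall x, A x -> g (f x) = x,
        forall y, B y -> f (g y) = y &
        {within B, continuous g}].
Arguments homeo_on {T U} A B f.

(* A subset of R^n is a (topological, "continuous") manifold: every point
   has a neighbourhood relatively open in M homeomorphic to an open subset
   of some R^k. (Hausdorff / second countability are automatic in R^n.) *)
Definition top_manifold (n : nat) (M : set 'rV[R]_n) : Prop :=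
  forall x, M x -> exists (O : set 'rV[R]_n) (k : nat) (V : set 'rV[R]_k)
    (f : 'rV[R]_n -> 'rV[R]_k),
    [/\ open O, O x, open V & homeo_on (M `&` O) V f].

Definition convex (n : nat) (A : set 'rV[R]_n) : Prop :=
  @convex_set R 'rV[R]_n A.

Definition path_connected (n : nat) (A : set 'rV[R]_n) : Prop :=
  forall x y, A x -> A y -> exists gamma : R -> 'rV[R]_n,
    [/\ gamma 0 = x, gamma 1 = y,
        (forall t, 0 <= t <= 1 -> A (gamma t)) &
        {within `[0, 1], continuous gamma}].

(* pi_I(z) = (z_i)_{i in I}, coordinates listed in increasing order. *)
Definition prj (n : nat) (I : {set 'I_n}) (z : 'rV[R]_n) : 'rV[R]_#|I| :=
  \row_(k < #|I|) z 0 (enum_val k).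
Arguments prj {n} I z.

Definition extend (n : nat) (J : {set 'I_n}) (v : 'rV[R]_#|J|) : 'rV[R]_n :=
  \row_(i < n) (if [pick k : 'I_#|J| | enum_val k == i] is Some k
                then v 0 k else 0).
Arguments extend {n} J v.

Definition subproj (n : nat) (I J : {set 'I_n}) (v : 'rV[R]_#|J|)
  : 'rV[R]_#|I| := prj I (extend J v).
Arguments subproj {n} I J v.

Definition imprj (n : nat) (Z : set 'rV[R]_n) (I : {set 'I_n}) :=
  prj I @` Z.
Arguments imprj {n} Z I.

(* The family {D_A}: data X, Y_A, y_A with X, Y_A manifolds, y_A : X -> Y_A. *)
Definition family_ok (na dx : nat) (P : {set {set 'I_na}})
    (dY : {set 'I_na} -> nat) (X : set 'rV[R]_dx)
    (Y : forall A, set 'rV[R]_(dY A))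
    (y : forall A, 'rV[R]_dx -> 'rV[R]_(dY A)) : Prop :=
  top_manifold X /\
  forall A, A \in P -> top_manifold (Y A) /\ (forall x, X x -> Y A (y A x)).

Definition is_AIR (na dx : nat) (P : {set {set 'I_na}})
    (dY : {set 'I_na} -> nat) (X : set 'rV[R]_dx)
    (Y : forall A, set 'rV[R]_(dY A))
    (y : forall A, 'rV[R]_dx -> 'rV[R]_(dY A))
    (dZ : nat) (Z : set 'rV[R]_dZ) (psi : 'rV[R]_dx -> 'rV[R]_dZ)
    (I : {set 'I_na} -> {set 'I_dZ})
    (phi : forall A, 'rV[R]_#|I A| -> 'rV[R]_(dY A)) : Prop :=
  [/\ top_manifold Z,
      (forall x, X x -> Z (psi x)),
      {within X, continuous psi} &
      forall A, A \in P ->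
        [/\ forall za, imprj Z (I A) za -> Y A (phi A za),
            {within imprj Z (I A), continuous (phi A)} &
            forall x, X x -> phi A (prj (I A) (psi x)) = y A x]].

Definition is_minAIR (na dx : nat) (P : {set {set 'I_na}})
    (dY : {set 'I_na} -> nat) (X : set 'rV[R]_dx)
    (Y : forall A, set 'rV[R]_(dY A))
    (y : forall A, 'rV[R]_dx -> 'rV[R]_(dY A))
    (dZ : nat) (Z : set 'rV[R]_dZ) (psi : 'rV[R]_dx -> 'rV[R]_dZ)
    (I : {set 'I_na} -> {set 'I_dZ})
    (phi : forall A, 'rV[R]_#|I A| -> 'rV[R]_(dY A)) : Prop :=
  [/\ @is_AIR na dx P dY X Y y dZ Z psi I phi,
      psi @` X = Z,
      dZ = #|(\bigcup_(A in P) I A)%SET|,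
      (forall A, A \in P -> homeo_on (imprj Z (I A)) (Y A) (phi A)) &
      open Z].

Definition Cpatch (na : nat) (P : {set {set 'I_na}})
    (dY : {set 'I_na} -> nat)
    (dZ : nat) (Iz : {set 'I_na} -> {set 'I_dZ})
    (phiz : forall A, 'rV[R]_#|Iz A| -> 'rV[R]_(dY A)) (Zp : set 'rV[R]_dZ)
    (dC : nat) (C : set 'rV[R]_dC) (Ic : {set 'I_na} -> {set 'I_dC})
    (phic : forall A, 'rV[R]_#|Ic A| -> 'rV[R]_(dY A)) : set 'rV[R]_dC :=
  [set c | C c /\ exists z, Zp z /\
     forall A, A \in P -> phic A (prj (Ic A) c) = phiz A (prj (Iz A) z)].

End AIR.

Arguments homeo_on {T U} A B f.
Arguments top_manifold {R n} M.
Arguments convex {R n} A.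
Arguments path_connected {R n} A.
Arguments prj {R n} I z.
Arguments extend {R n} J v.
Arguments subproj {R n} I J v.
Arguments imprj {R n} Z I.
Arguments family_ok {R na dx} P dY X Y y.
Arguments is_AIR {R na dx} P dY X Y y {dZ} Z psi I phi.
Arguments is_minAIR {R na dx} P dY X Y y {dZ} Z psi I phi.
Arguments Cpatch {R na} P dY {dZ} Iz phiz Zp {dC} C Ic phic.

(* Both minimal representations encode the same data x in X, so the transition
   h : psi^(z) x |-> psi^(c) x is a well-defined map Z -> C, inverse to the
   transition in the other direction. For A in P the I^(c)_A-block of h z is
   (phi^(c)_A)^-1 (phi^(z)_A z_A); these blocks cover all coordinates of C, so
   h is continuous. The same formula shows that moving z along a coordinate
   outside I^(z)_A does not change the I^(c)_A-block of h z, hence, for A in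
   the chosen family, does not change its I^(c)_O-block. In an open convex set
   two points with equal I^(z)_O-coordinates are joined by a staircase of such
   single-coordinate moves, so prj_{I^(c)_O} o h factors through
   prj_{I^(z)_O} on Z|patch: the factor is g_O. Composing h with the local
   section w |-> z0 + (w - z0_O) of the projection makes g_O continuous, and
   it maps the convex set Z_O|patch onto a path-connected set. When
   h(Z|patch) lies in an open convex C_conv, the same argument applied to
   h^-1 on C_conv gives a continuous inverse of g_O and openness of its
   image. *)

From mathcomp Require Import all_boot all_order all_algebra.
From mathcomp Require Import all_classical all_reals all_analysis.
From mathcomp Require Import ring.
Import Order.TTheory GRing.Theory Num.Theory.
Import numFieldNormedType.Exports.
Local Open Scope classical_set_scope.
Local Open Scope ring_scope.
Local Open Scope convex_scope.

Lemma homeo_on_inj {T U : topologicalType} {A : set T} {B : set U} {f : T -> U} :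
  homeo_on A B f -> {in A &, injective f}.
Proof.
move=> [_ [_ [g [_ gK _ _]]]] a a' /set_mem Aa /set_mem Aa' fa.
by rewrite -(gK a) // fa gK.
Qed.

Lemma cvg_comp_within {T : Type} {U V : topologicalType} (F : set_system T)
    {FF : Filter F} (f : T -> U) (g : U -> V) (B : set U) (u : U) :
  f @ F --> u -> (\forall t \near F, B (f t)) -> B u ->
  {within B, continuous g} -> g \o f @ F --> g u.
Proof.
move=> fu FB Bu gc W /((subspace_continuousP B g).1 gc u Bu) /fu.
by apply: filterS2 FB => t Bt; apply.
Qed.

Section Coordinates.
Context {R : realType}.
Implicit Types (n : nat).

Lemma prjE n (I : {set 'I_n}) (z : 'rV[R]_n) k : prj I z 0 k = z 0 (enum_val k).
Proof. by rewrite mxE. Qed.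

Lemma prj_eqP n (I : {set 'I_n}) (z z' : 'rV[R]_n) :
  prj I z = prj I z' <-> {in I, forall i, z 0 i = z' 0 i}.
Proof.
split => [/rowP eqzz' i Ii|eqzz'].
  by have := eqzz' (enum_rank_in Ii i); rewrite !prjE enum_rankK_in.
by apply/rowP => k; rewrite !prjE eqzz' ?enum_valP.
Qed.

Lemma extendE n (I : {set 'I_n}) (v : 'rV[R]_#|I|) k :
  extend I v 0 (enum_val k) = v 0 k.
Proof.
rewrite mxE; case: pickP => [k' /eqP/enum_val_inj -> //|/(_ k)].
by rewrite eqxx.
Qed.

Lemma extend0 n (I : {set 'I_n}) : extend I (0 : 'rV[R]_#|I|) = 0.
Proof. by apply/rowP => i; rewrite !mxE; case: pickP => // k _; rewrite mxE. Qed.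

Lemma prj_extend n (I : {set 'I_n}) (v : 'rV[R]_#|I|) : prj I (extend I v) = v.
Proof. by apply/rowP => k; rewrite prjE extendE. Qed.

Lemma subproj_prj n (I J : {set 'I_n}) (z : 'rV[R]_n) :
  I \subset J -> subproj I J (prj J z) = prj I z.
Proof.
move=> IJ; apply/rowP => k; rewrite /subproj !prjE.
have Jk : enum_val k \in J := fintype.subsetP IJ _ (enum_valP k).
by rewrite -(enum_rankK_in Jk Jk) extendE prjE.
Qed.

Lemma prjD n (I : {set 'I_n}) (z w : 'rV[R]_n) : prj I (z + w) = prj I z + prj I w.
Proof. by apply/rowP => k; rewrite !mxE. Qed.

Lemma prjZ n (I : {set 'I_n}) a (z : 'rV[R]_n) : prj I (a *: z) = a *: prj I z.
Proof. by apply/rowP => k; rewrite !mxE. Qed.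

Lemma cvg_rowP (T : Type) (F : set_system T) {FF : Filter F} n
    (f : T -> 'rV[R]_n) (l : 'rV[R]_n) :
  (forall j, (fun x => f x 0 j) @ F --> l 0 j) -> f @ F --> l.
Proof.
move=> fl A /nbhs_ballP[e /= e0 eA].
have : \forall x \near F, forall j, ball (l 0 j) e (f x 0 j).
  by apply: filter_forall => j; exact: (fl j _ (nbhsx_ballx _ _ e0)).
by apply: filterS => x flx; apply: eA; split => // i j; rewrite (ord1 i).
Qed.

Lemma prj_continuous n (I : {set 'I_n}) : continuous (@prj R n I).
Proof.
move=> z; apply: (@cvg_rowP _ _ (nbhs_filter z)) => k; rewrite prjE.
under eq_fun do rewrite prjE.
exact: coord_continuous.
Qed.

Lemma extend_continuous n (I : {set 'I_n}) : continuous (@extend R n I).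
Proof.
move=> v; apply: (@cvg_rowP _ _ (nbhs_filter v)) => i; rewrite mxE.
under eq_fun do rewrite mxE.
case: pickP => [k _|_]; [exact: coord_continuous | exact: cvg_cst].
Qed.

Lemma cvg_prj_cover (T : Type) (F : set_system T) {FF : Filter F} n
    (K : finType) (P : {set K}) (I : K -> {set 'I_n})
    (f : T -> 'rV[R]_n) (l : 'rV[R]_n) :
  (forall i, exists2 A, A \in P & i \in I A) ->
  (forall A, A \in P -> prj (I A) \o f @ F --> prj (I A) l) -> f @ F --> l.
Proof.
move=> cover fl; apply: cvg_rowP => j.
have [A PA Aj] := cover j; have <- := enum_rankK_in Aj Aj.
set k := enum_rank_in Aj j; rewrite -prjE.
have -> : (fun x => f x 0 (enum_val k)) =
    (fun v : 'rV[R]_#|I A| => v 0 k) \o (prj (I A) \o f).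
  by apply/funext => x /=; rewrite prjE.
apply: (cvg_comp _ _ (fl A PA)); exact: coord_continuous.
Qed.

End Coordinates.

Section SubstPrj.
Context {R : realType} {n : nat} (I : {set 'I_n}).

Definition subst_prj (z0 : 'rV[R]_n) (w : 'rV[R]_#|I|) : 'rV[R]_n :=
  z0 + extend I (w - prj I z0).

Lemma prj_subst z0 w : prj I (subst_prj z0 w) = w.
Proof. by rewrite prjD prj_extend addrC subrK. Qed.

Lemma subst_prj_id z0 : subst_prj z0 (prj I z0) = z0.
Proof. by rewrite /subst_prj subrr extend0 addr0. Qed.

Lemma subst_prj_continuous z0 : continuous (subst_prj z0).
Proof.
have translate (V W : normedModType R) (L : V -> W) (a : W) (c : V) :
    continuous L -> continuous (fun v => a + L (v - c)).
  move=> Lc v; apply: cvgD; first exact: cvg_cst.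
  apply: (cvg_comp (fun v => v - c) L); last exact: Lc.
  by apply: cvgB; [exact: cvg_id | exact: cvg_cst].
exact/translate/extend_continuous.
Qed.

Lemma subst_prj_cvg z0 : subst_prj z0 @ prj I z0 --> z0.
Proof.
by have := subst_prj_continuous z0 (prj I z0); rewrite /continuous_at subst_prj_id.
Qed.

Lemma open_imprj (S : set 'rV[R]_n) : open S -> open (imprj S I).
Proof.
move=> oS; rewrite openE => _ [z0 Sz0 <-].
have nS : nbhs z0 S by exact: open_nbhs_nbhs.
move: (subst_prj_cvg z0 _ nS); rewrite /interior.
apply: (@filterS _ _ (nbhs_filter (prj I z0))) => w Sw.
by exists (subst_prj z0 w); rewrite ?prj_subst.
Qed.

End SubstPrj.

Section Convexity.
Context {R : realType}.

Lemma convE n (x y : 'rV[R]_n) (l : {i01 R}) :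
  ((x : convex_lmodType _) <| l |> y) = l%:num *: x + (1 - l%:num) *: y.
Proof. by []. Qed.

Lemma convex_segment n (S : set 'rV[R]_n) p q t : convex S -> S p -> S q ->
  0 <= t <= 1 -> S (p + t *: (q - p)).
Proof.
move=> cS Sp Sq /andP[t0 t1].
have t'0 : 0 <= 1 - t by rewrite subr_ge0.
have t'1 : 1 - t <= 1 by rewrite lerBlDr lerDl.
have := cS p q (Itv01 t'0 t'1); rewrite !in_setE convE /= => /(_ Sp Sq).
by congr S; apply/rowP => i; rewrite !mxE; ring.
Qed.

Lemma convex_imprj n (S : set 'rV[R]_n) (I : {set 'I_n}) :
  convex S -> convex (imprj S I).
Proof.
move=> cS _ _ l /set_mem[p Sp <-] /set_mem[q Sq <-]; rewrite in_setE.
have /set_mem Spq := cS p q l (mem_set Sp) (mem_set Sq).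
by exists ((p : convex_lmodType _) <| l |> q) => //; rewrite !convE prjD !prjZ.
Qed.

Lemma convex_path_connected_image n m (D : set 'rV[R]_n)
    (g : 'rV[R]_n -> 'rV[R]_m) :
  convex D -> {in D, continuous g} -> path_connected (g @` D).
Proof.
move=> cD gc _ _ [a Da <-] [b Db <-].
have Dab t : 0 <= t <= 1 -> D (a + t *: (b - a)) by exact: convex_segment.
exists (g \o fun t => a + t *: (b - a)); split => /=.
- by rewrite scale0r addr0.
- by rewrite scale1r addrC subrK.
- by move=> t /Dab Dt; exists (a + t *: (b - a)).
apply: within_continuous_comp.
  move=> _ /set_mem[t t01 <-]; apply/gc/mem_set/Dab.
  by move: t01; rewrite /= in_itv.
apply: continuous_subspaceT => t.
apply: cvgD; first exact: cvg_cst.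
by apply: cvgZ; [exact: cvg_id | exact: cvg_cst].
Qed.

End Convexity.

Section Staircase.
Context {R : realType} {n : nat} (S : set 'rV[R]_n) (I : {set 'I_n}).
Context {T : Type} (F : 'rV[R]_n -> T).

Definition coordwise_invariant := forall j, j \notin I ->
  forall p q, S p -> S q -> (forall i, i != j -> p 0 i = q 0 i) -> F p = F q.

Hypothesis F_inv : coordwise_invariant.

Lemma ball_coordwise_invariant (m y : 'rV[R]_n) (r : R) :
  ball m r `<=` S -> ball m r y -> {in I, forall i, m 0 i = y 0 i} ->
  F m = F y.
Proof.
move=> mS [r0 my] myI.
pose q k := \row_(j < n) (if (j < k)%N then y 0 j else m 0 j).
have qS k : S (q k).
  apply: mS; split => // i j; rewrite (ord1 i) !mxE.
  by case: ifP => _; [exact: my | exact: ballxx].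
have -> : y = q n by apply/rowP => j; rewrite !mxE ltn_ord.
suff Fq k : (k <= n)%N -> F m = F (q k) by exact: Fq.
elim: k => [_|k IHk kn].
  by congr F; apply/rowP => j; rewrite !mxE ltn0.
rewrite IHk ?(ltnW kn) //; pose jk : 'I_n := Ordinal kn.
have qSk i : i != jk -> q k 0 i = q k.+1 0 i.
  move=> ijk; rewrite !mxE (ltnS i k) (leq_eqVlt i k).
  suff -> : (i == k :> nat) = false by [].
  by apply: contraNF ijk => /eqP ik; apply/eqP/val_inj.
have [Ijk|nIjk] := boolP (jk \in I); last exact: F_inv nIjk _ _ (qS k) (qS k.+1) qSk.
congr F; apply/rowP => i; have [->|/qSk //] := eqVneq i jk.
by rewrite !mxE /= ltnSn ltnn myI.
Qed.

Lemma ball_segment_sub (p q : 'rV[R]_n) (r t : R) : convex S ->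
  ball p r `<=` S -> ball q r `<=` S -> 0 <= t <= 1 ->
  ball (p + t *: (q - p)) r `<=` S.
Proof.
move=> cS pS qS t01 w; rewrite -ball_normE /= => wr.
set d := w - (p + t *: (q - p)).
have -> : w = (p + d) + t *: ((q + d) - (p + d)).
  by rewrite opprD addrACA subrr addr0 addrAC /d addrC subrK.
apply: convex_segment t01 => //; [apply: pS | apply: qS];
  by rewrite -ball_normE /= opprD addrA subrr sub0r normrN -normrN opprB.
Qed.

Lemma open_convex_coordwise_invariant : open S -> convex S ->
  forall p q, S p -> S q -> {in I, forall i, p 0 i = q 0 i} -> F p = F q.
Proof.
move=> oS cS p q Sp Sq pqI.
have /nbhs_ballP[e1 /= e1_gt0 pS] : nbhs p S by exact: open_nbhs_nbhs.
have /nbhs_ballP[e2 /= e2_gt0 qS] : nbhs q S by exact: open_nbhs_nbhs.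
pose r := Num.min e1 e2.
have r_gt0 : 0 < r by rewrite lt_min e1_gt0 e2_gt0.
(* N steps of length |q - p| / N < r, each the center of a ball of radius r
   inside S. *)
pose N := (Num.truncn (`|q - p| / r)).+1.
have N_neq0 : (N%:R : R) != 0 by rewrite pnatr_eq0.
pose m (k : nat) := p + (k%:R / N%:R) *: (q - p).
have mS k : (k <= N)%N -> ball (m k) r `<=` S.
  move=> kN; apply: ball_segment_sub => //.
  - by apply: subset_trans pS; apply: le_ball; rewrite ge_min lexx.
  - by apply: subset_trans qS; apply: le_ball; rewrite ge_min lexx orbT.
  - by rewrite divr_ge0 ?ler0n //= ler_pdivrMr ?ltr0n // mul1r ler_nat.
have mI k : {in I, forall i, m k 0 i = p 0 i}.
  by move=> i Ii; rewrite !mxE -pqI // subrr mulr0 addr0.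
have step k : (k < N)%N -> F (m k) = F (m k.+1).
  move=> kN; apply: ball_coordwise_invariant (mS k (ltnW kN)) _ _; last first.
    by move=> i Ii; rewrite !mI.
  rewrite -ball_normE /= opprD addrACA subrr add0r -scalerBl.
  have -> : k%:R / N%:R - k.+1%:R / N%:R = - N%:R^-1 :> R.
    by rewrite -natr1 mulrDl opprD addrA subrr add0r mul1r.
  rewrite normrZ normrN normfV normr_nat mulrC ltr_pdivrMr ?ltr0n // mulrC.
  by rewrite -ltr_pdivrMr // truncnS_gt.
have mN : m N = q by rewrite /m divff // scale1r addrC subrK.
have m0 : m 0%N = p by rewrite /m mul0r scale0r addr0.
rewrite -mN -m0; suff Fm k : (k <= N)%N -> F (m 0%N) = F (m k) by exact: Fm.
by elim: k => // k IHk kN; rewrite IHk ?(ltnW kN) // step.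
Qed.

End Staircase.

Section Factor.
Context {R : realType} {n m : nat} (I : {set 'I_n}) (J : {set 'I_m}).
Variables (S : set 'rV[R]_n) (h : 'rV[R]_n -> 'rV[R]_m).
Variable g : 'rV[R]_#|I| -> 'rV[R]_#|J|.
Hypothesis oS : open S.
Hypothesis h_cont : forall z, S z -> {for z, continuous h}.
Hypothesis gE : forall z, S z -> g (prj I z) = prj J (h z).

Lemma factor_continuous : {in imprj S I, continuous g}.
Proof.
move=> _ /set_mem[z0 Sz0 <-].
have nS : nbhs z0 S by exact: open_nbhs_nbhs.
have E : \forall w \near prj I z0, prj J (h (subst_prj I z0 w)) = g w.
  move: (subst_prj_cvg I z0 _ nS).
  apply: (@filterS _ _ (nbhs_filter (prj I z0))) => w Sw.
  by rewrite -[in RHS](prj_subst I z0 w) gE.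
rewrite /continuous_at gE //; apply: cvg_trans (near_eq_cvg E) _.
apply: (cvg_comp _ (prj J \o h) (subst_prj_cvg I z0)).
exact: (continuous_comp (h_cont _ Sz0) (prj_continuous _ J (h z0))).
Qed.

End Factor.

Section FactorHomeo.
Context {R : realType} {n m : nat} (I : {set 'I_n}) (J : {set 'I_m}).
Variables (S : set 'rV[R]_n) (T : set 'rV[R]_m).
Variables (h : 'rV[R]_n -> 'rV[R]_m) (k : 'rV[R]_m -> 'rV[R]_n).
Variable g : 'rV[R]_#|I| -> 'rV[R]_#|J|.
Hypotheses (oS : open S) (oT : open T).
Hypothesis h_cont : forall z, S z -> {for z, continuous h}.
Hypothesis k_cont : forall c, T c -> {for c, continuous k}.
Hypothesis hS : forall z, S z -> T (h z).
Hypothesis hK : forall z, S z -> k (h z) = z.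
Hypothesis kK : forall c, T c -> h (k c) = c.
Hypothesis k_descends : forall c c', T c -> T c' ->
  prj J c = prj J c' -> prj I (k c) = prj I (k c').
Hypothesis gE : forall z, S z -> g (prj I z) = prj J (h z).

Lemma factor_image_open : open (g @` imprj S I).
Proof.
rewrite openE => _ [_ [z0 Sz0 <-] <-]; rewrite gE // /interior.
have nT : nbhs (h z0) T by apply: open_nbhs_nbhs; split => //; exact: hS.
have nS : nbhs (k (h z0)) S by apply: open_nbhs_nbhs; split; rewrite ?hK.
have kS := cvg_comp _ _ (subst_prj_cvg J (h z0)) (k_cont _ (hS _ Sz0)) _ nS.
have TS := subst_prj_cvg J (h z0) _ nT.
apply: (@filterS2 _ _ (nbhs_filter _) _ _ _ _ TS kS) => w Tw Sw.
exists (prj I (k (subst_prj J (h z0) w))); first by exists (k (subst_prj J (h z0) w)).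
by rewrite gE // kK // prj_subst.
Qed.

Lemma factor_homeo : homeo_on (imprj S I) (g @` imprj S I) g.
Proof.
pose ginv w := prj I (k (get [set c | T c /\ prj J c = w])).
have ginvE c : T c -> ginv (prj J c) = prj I (k c).
  move=> Tc; pose Pc := [set c' | T c' /\ prj J c' = prj J c].
  have /getPex[Tc' eqc] : exists c', Pc c' by exists c.
  exact: k_descends _ _ Tc' Tc eqc.
have ginvK z : S z -> ginv (g (prj I z)) = prj I z.
  by move=> Sz; rewrite gE // ginvE ?hK //; exact: hS.
split; first by move=> w Sw; exists w.
split.
  exact: continuous_in_subspaceT (factor_continuous _ _ _ _ _ oS h_cont gE).
exists ginv; split.
- by move=> _ [_ [z Sz <-] <-]; rewrite ginvK //; exists z.
- by move=> _ [z Sz <-]; rewrite ginvK.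
- by move=> _ [_ [z Sz <-] <-]; rewrite ginvK.
apply: continuous_in_subspaceT => _ /set_mem[_ [z Sz <-] <-].
rewrite gE //; apply: (factor_continuous J I T k ginv) => //.
by rewrite inE; exists (h z) => //; exact: hS.
Qed.

End FactorHomeo.

Section MinimalAIR.
Context {R : realType} {na dx : nat} {P : {set {set 'I_na}}}.
Context {dY : {set 'I_na} -> nat} {X : set 'rV[R]_dx}.
Context {Y : forall A, set 'rV[R]_(dY A)} {y : forall A, 'rV[R]_dx -> 'rV[R]_(dY A)}.
Context {dZ : nat} {Z : set 'rV[R]_dZ} {psi : 'rV[R]_dx -> 'rV[R]_dZ}.
Context {I : {set 'I_na} -> {set 'I_dZ}}.
Context {phi : forall A, 'rV[R]_#|I A| -> 'rV[R]_(dY A)}.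
Hypothesis minZ : is_minAIR P dY X Y y Z psi I phi.

Lemma minAIR_open : open Z.
Proof. by case: minZ. Qed.

Lemma minAIR_psi_onto z : Z z -> exists2 x, X x & psi x = z.
Proof. by case: minZ => _ <- _ _ _ [x Xx <-]; exists x. Qed.

Lemma minAIR_psi_in x : X x -> Z (psi x).
Proof. by case: minZ => _ <- _ _ _ Xx; exists x. Qed.

Lemma minAIR_phi_psi A x : A \in P -> X x -> phi A (prj (I A) (psi x)) = y A x.
Proof. by case: minZ => -[_ _ _ phiP] _ _ _ _ /phiP[_ _]; apply. Qed.

Lemma minAIR_phi_in A za : A \in P -> imprj Z (I A) za -> Y A (phi A za).
Proof. by case: minZ => -[_ _ _ phiP] _ _ _ _ /phiP[+ _ _]; apply. Qed.

Lemma minAIR_phi_continuous A : A \in P -> {in imprj Z (I A), continuous (phi A)}.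
Proof.
case: minZ => -[_ _ _ phiP] _ _ _ oZ /phiP[_ phic _].
by rewrite -continuous_open_subspace //; exact: open_imprj.
Qed.

Lemma minAIR_phi_homeo A : A \in P -> homeo_on (imprj Z (I A)) (Y A) (phi A).
Proof. by case: minZ => _ _ _ + _; apply. Qed.

Lemma minAIR_phi_inj A z z' : A \in P -> Z z -> Z z' ->
  phi A (prj (I A) z) = phi A (prj (I A) z') -> prj (I A) z = prj (I A) z'.
Proof.
move=> PA Zz Zz'; apply: (homeo_on_inj (minAIR_phi_homeo _ PA)).
  by rewrite inE; exists z.
by rewrite inE; exists z'.
Qed.

Lemma minAIR_cover (i : 'I_dZ) : exists2 A, A \in P & i \in I A.
Proof.
case: minZ => _ _ dZE _ _.
have cover : (\bigcup_(A in P) I A)%SET = [set: 'I_dZ]%SET.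
  by apply/eqP; rewrite finset.eqEcard finset.subsetT cardsT card_ord (eq_leq dZE).
by apply/bigcupP; rewrite cover inE.
Qed.

Lemma minAIR_prj_inj (z z' : 'rV[R]_dZ) :
  (forall A, A \in P -> prj (I A) z = prj (I A) z') -> z = z'.
Proof.
move=> eqzz'; apply/rowP => i; have [A PA Ai] := minAIR_cover i.
by move/prj_eqP: (eqzz' A PA); apply.
Qed.

End MinimalAIR.

(* Only meaningful on [Z]: elsewhere [get] picks an arbitrary point. *)
Definition transition {R : realType} {dx dZ dC : nat} (X : set 'rV[R]_dx)
    (psiz : 'rV[R]_dx -> 'rV[R]_dZ) (psic : 'rV[R]_dx -> 'rV[R]_dC)
    (z : 'rV[R]_dZ) : 'rV[R]_dC :=
  psic (get [set x | X x /\ psiz x = z]).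

Section Transition.
Context {R : realType} {na dx : nat} {P : {set {set 'I_na}}}.
Context {dY : {set 'I_na} -> nat} {X : set 'rV[R]_dx}.
Context {Y : forall A, set 'rV[R]_(dY A)} {y : forall A, 'rV[R]_dx -> 'rV[R]_(dY A)}.
Context {dZ : nat} {Z : set 'rV[R]_dZ} {psiz : 'rV[R]_dx -> 'rV[R]_dZ}.
Context {Iz : {set 'I_na} -> {set 'I_dZ}}.
Context {phiz : forall A, 'rV[R]_#|Iz A| -> 'rV[R]_(dY A)}.
Context {dC : nat} {C : set 'rV[R]_dC} {psic : 'rV[R]_dx -> 'rV[R]_dC}.
Context {Ic : {set 'I_na} -> {set 'I_dC}}.
Context {phic : forall A, 'rV[R]_#|Ic A| -> 'rV[R]_(dY A)}.
Hypothesis minZ : is_minAIR P dY X Y y Z psiz Iz phiz.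
Hypothesis minC : is_minAIR P dY X Y y C psic Ic phic.

Local Notation h := (transition X psiz psic).

Lemma transition_preimage z : Z z ->
  exists2 x, X x /\ psiz x = z & h z = psic x.
Proof.
move=> /(minAIR_psi_onto minZ)[x Xx psizx].
have /getPex : exists x, [set x | X x /\ psiz x = z] x by exists x.
by exists (get [set x | X x /\ psiz x = z]).
Qed.

Lemma transition_in z : Z z -> C (h z).
Proof.
by move=> /transition_preimage[x [Xx _] ->]; exact: minAIR_psi_in minC _ Xx.
Qed.

Lemma phi_transition A z : A \in P -> Z z ->
  phic A (prj (Ic A) (h z)) = phiz A (prj (Iz A) z).
Proof.
move=> PA /transition_preimage[x [Xx <-] ->].
by rewrite (minAIR_phi_psi minC) ?(minAIR_phi_psi minZ).
Qed.

Lemma transition_psi x : X x -> h (psiz x) = psic x.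
Proof.
move=> Xx; have Zx := minAIR_psi_in minZ _ Xx.
apply: (minAIR_prj_inj minC) => A PA.
apply: (minAIR_phi_inj minC) => //; first exact: transition_in.
  exact: minAIR_psi_in minC _ Xx.
by rewrite phi_transition // !(minAIR_phi_psi minZ, minAIR_phi_psi minC).
Qed.

Lemma prj_transition_eq A z z' : A \in P -> Z z -> Z z' ->
  prj (Iz A) z = prj (Iz A) z' -> prj (Ic A) (h z) = prj (Ic A) (h z').
Proof.
move=> PA Zz Zz' eqzz'; apply: (minAIR_phi_inj minC) => //; try exact: transition_in.
by rewrite !phi_transition // eqzz'.
Qed.

Lemma prj_transitionE (phic_inv : forall A, 'rV[R]_(dY A) -> 'rV[R]_#|Ic A|) A z :
  A \in P -> (forall ca, imprj C (Ic A) ca -> phic_inv A (phic A ca) = ca) ->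
  Z z -> phic_inv A (phiz A (prj (Iz A) z)) = prj (Ic A) (h z).
Proof.
move=> PA phicK Zz; rewrite -phi_transition // phicK //.
by exists (h z) => //; exact: transition_in.
Qed.

Lemma Cpatch_transition (Zp : set 'rV[R]_dZ) z : Zp `<=` Z -> Zp z ->
  Cpatch P dY Iz phiz Zp C Ic phic (h z).
Proof.
move=> ZpZ Zpz; split; first exact/transition_in/ZpZ.
by exists z; split => // A PA; apply/phi_transition/ZpZ.
Qed.

Lemma transition_continuous z0 : Z z0 -> {for z0, continuous h}.
Proof.
move=> Zz0; have nZ : nbhs z0 Z.
  by apply: open_nbhs_nbhs; split => //; exact: minAIR_open minZ.
apply: (@cvg_prj_cover _ _ _ (nbhs_filter z0) _ _ _ _ _ _ (minAIR_cover minC)).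
move=> A PA.
have [_ [_ [g [_ gK _ gc]]]] := minAIR_phi_homeo minC _ PA.
pose f z := phiz A (prj (Iz A) z).
have E : \forall z \near z0, g (f z) = prj (Ic A) (h z).
  apply: filterS nZ => z Zz; rewrite /f -phi_transition // gK //.
  by exists (h z) => //; exact: transition_in.
rewrite -(nbhs_singleton E); apply: cvg_trans (near_eq_cvg E) _.
apply: (@cvg_comp_within _ _ _ _ _ f g (Y A)).
- have phiz_cont : {for prj (Iz A) z0, continuous (phiz A)}.
    by apply: (minAIR_phi_continuous minZ _ PA); rewrite inE; exists z0.
  exact: continuous_comp (prj_continuous _ _ z0) phiz_cont.
- by apply: filterS nZ => z Zz; apply: (minAIR_phi_in minZ _ _ PA); exists z.
- by apply: (minAIR_phi_in minZ _ _ PA); exists z0.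
- exact: gc.
Qed.

Lemma transition_descends (AA : {set {set 'I_na}}) (S : set 'rV[R]_dZ) :
  AA \subset P -> S `<=` Z -> open S -> convex S ->
  forall z z', S z -> S z' ->
  prj (\bigcap_(A in AA) Iz A)%SET z = prj (\bigcap_(A in AA) Iz A)%SET z' ->
  prj (\bigcap_(A in AA) Ic A)%SET (h z) = prj (\bigcap_(A in AA) Ic A)%SET (h z').
Proof.
move=> AAP SZ oS cS z z' Sz Sz' /prj_eqP eqzz'.
apply: (open_convex_coordwise_invariant S _ (prj _ \o h)) eqzz' => //.
move=> j nIj p q pS qS pq.
have [A AAA nAj] : exists2 A, A \in AA & j \notin Iz A.
  move: nIj; rewrite -finset.in_setC finset.setC_bigcap => /bigcupP[A AAA].
  by rewrite inE; exists A.
have IcA : (\bigcap_(A in AA) Ic A \subset Ic A)%SET := finset.bigcap_inf _ AAA.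
rewrite /= -(subproj_prj _ _ _ (h p) IcA) -(subproj_prj _ _ _ (h q) IcA).
congr subproj; apply: prj_transition_eq.
- exact: fintype.subsetP AAP _ AAA.
- exact: SZ.
- exact: SZ.
- by apply/prj_eqP => i Ai; apply: pq; apply: contraNneq nAj => <-.
Qed.

End Transition.

Lemma transitionK {R na dx P dY X Y y dZ Z psiz Iz phiz dC C psic Ic phic} :
  @is_minAIR R na dx P dY X Y y dZ Z psiz Iz phiz ->
  @is_minAIR R na dx P dY X Y y dC C psic Ic phic ->
  forall z, Z z -> transition X psic psiz (transition X psiz psic z) = z.
Proof.
move=> minZ minC _ /(minAIR_psi_onto minZ)[x Xx <-].
by rewrite (transition_psi minZ minC) // (transition_psi minC minZ).
Qed.

Section Patch.
Context {R : realType} {na dx : nat} {P : {set {set 'I_na}}}.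
Context {dY : {set 'I_na} -> nat} {X : set 'rV[R]_dx}.
Context {Y : forall A, set 'rV[R]_(dY A)} {y : forall A, 'rV[R]_dx -> 'rV[R]_(dY A)}.
Context {dZ : nat} {Z : set 'rV[R]_dZ} {psiz : 'rV[R]_dx -> 'rV[R]_dZ}.
Context {Iz : {set 'I_na} -> {set 'I_dZ}}.
Context {phiz : forall A, 'rV[R]_#|Iz A| -> 'rV[R]_(dY A)}.
Context {dC : nat} {C : set 'rV[R]_dC} {psic : 'rV[R]_dx -> 'rV[R]_dC}.
Context {Ic : {set 'I_na} -> {set 'I_dC}}.
Context {phic : forall A, 'rV[R]_#|Ic A| -> 'rV[R]_(dY A)}.
Hypothesis minZ : is_minAIR P dY X Y y Z psiz Iz phiz.
Hypothesis minC : is_minAIR P dY X Y y C psic Ic phic.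
Context {AA : {set {set 'I_na}}} {Zp : set 'rV[R]_dZ}.
Hypotheses (AAP : AA \subset P) (ZpZ : Zp `<=` Z) (oZp : open Zp).

Local Notation IOz := (\bigcap_(A in AA) Iz A)%SET.
Local Notation IOc := (\bigcap_(A in AA) Ic A)%SET.
Local Notation h := (transition X psiz psic).
Local Notation k := (transition X psic psiz).

Variable gO : 'rV[R]_#|IOz| -> 'rV[R]_#|IOc|.
Hypothesis gOE : forall z, Zp z -> gO (prj IOz z) = prj IOc (h z).

Let h_cont z : Zp z -> {for z, continuous h}.
Proof. by move=> /ZpZ; exact: transition_continuous minZ minC z. Qed.

Lemma patch_continuous : {in imprj Zp IOz, continuous gO}.
Proof. exact: factor_continuous oZp h_cont gOE. Qed.

Lemma patch_path_connected : convex Zp -> path_connected (gO @` imprj Zp IOz).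
Proof.
move=> cZp; apply: convex_path_connected_image patch_continuous.
exact: convex_imprj.
Qed.

Lemma patch_homeo_open (Cconv : set 'rV[R]_dC) :
  convex Cconv -> open Cconv -> Cconv `<=` C -> (forall z, Zp z -> Cconv (h z)) ->
  homeo_on (imprj Zp IOz) (gO @` imprj Zp IOz) gO /\ open (gO @` imprj Zp IOz).
Proof.
move=> cCconv oCconv CconvC hCconv.
have k_descends := transition_descends minC minZ AA Cconv AAP CconvC oCconv cCconv.
have k_cont c : Cconv c -> {for c, continuous k}.
  by move=> /CconvC; exact: transition_continuous minC minZ c.
have hK z : Zp z -> k (h z) = z by move=> /ZpZ; exact: transitionK minZ minC z.
have kK c : Cconv c -> h (k c) = c by move=> /CconvC; exact: transitionK minC minZ c.
split; first exact: (factor_homeo IOz IOc Zp Cconv h k gO oZp oCconv h_cont).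
exact: (factor_image_open IOz IOc Zp Cconv h k gO oZp oCconv).
Qed.

End Patch.

Theorem theorem2 (R : realType) (na dx : nat) (P : {set {set 'I_na}})
    (dY : {set 'I_na} -> nat) (X : set 'rV[R]_dx)
    (Y : forall A, set 'rV[R]_(dY A))
    (y : forall A, 'rV[R]_dx -> 'rV[R]_(dY A))
    (dZ : nat) (Z : set 'rV[R]_dZ) (psiz : 'rV[R]_dx -> 'rV[R]_dZ)
    (Iz : {set 'I_na} -> {set 'I_dZ})
    (phiz : forall A, 'rV[R]_#|Iz A| -> 'rV[R]_(dY A))
    (dC : nat) (C : set 'rV[R]_dC) (psic : 'rV[R]_dx -> 'rV[R]_dC)
    (Ic : {set 'I_na} -> {set 'I_dC})
    (phic : forall A, 'rV[R]_#|Ic A| -> 'rV[R]_(dY A))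
    (phic_inv : forall A, 'rV[R]_(dY A) -> 'rV[R]_#|Ic A|)
    (Zp : set 'rV[R]_dZ) (AA : {set {set 'I_na}}) :
  family_ok P dY X Y y ->
  is_minAIR P dY X Y y Z psiz Iz phiz ->
  is_minAIR P dY X Y y C psic Ic phic ->
  (* phic_inv A is the inverse (phi^(c)_A)^{-1} : Y_A -> C_A *)
  (forall A, A \in P ->
     (forall u, Y A u ->
        imprj C (Ic A) (phic_inv A u) /\ phic A (phic_inv A u) = u) /\
     (forall ca, imprj C (Ic A) ca -> phic_inv A (phic A ca) = ca)) ->
  Zp `<=` Z -> convex Zp -> open Zp ->
  AA \subset P -> AA != finset.set0 ->
  let IOz := (\bigcap_(A in AA) Iz A)%SET in
  let IOc := (\bigcap_(A in AA) Ic A)%SET in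
  let ZOp := imprj Zp IOz in
  let gexpr A (zA : 'rV[R]_#|Iz A|) :=
    subproj IOc (Ic A) (phic_inv A (phiz A zA)) in
  (* well-definedness: independent of A in AA and of the embedding i_A *)
  (forall A A', A \in AA -> A' \in AA ->
     forall (zA : 'rV[R]_#|Iz A|) (zA' : 'rV[R]_#|Iz A'|),
       imprj Zp (Iz A) zA -> imprj Zp (Iz A') zA' ->
       subproj IOz (Iz A) zA = subproj IOz (Iz A') zA' ->
       gexpr A zA = gexpr A' zA') /\
  (forall gO : 'rV[R]_#|IOz| -> 'rV[R]_#|IOc|,
     (forall zO, ZOp zO -> exists A, A \in AA /\
        exists zA : 'rV[R]_#|Iz A|, [/\ imprj Zp (Iz A) zA,
          subproj IOz (Iz A) zA = zO & gO zO = gexpr A zA]) ->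
     let COp := gO @` ZOp in
     [/\ (forall c, COp c -> exists2 zO, ZOp zO & gO zO = c),
         {within ZOp, continuous gO},
         path_connected COp &
         forall Cconv : set 'rV[R]_dC,
           convex Cconv -> open Cconv ->
           Cpatch P dY Iz phiz Zp C Ic phic `<=` Cconv -> Cconv `<=` C ->
           homeo_on ZOp COp gO /\ open COp]).
Proof.
move=> _ minZ minC phic_invP ZpZ cZp oZp AAP _ IOz IOc ZOp gexpr.
have h_descends := transition_descends minZ minC AA Zp AAP ZpZ oZp cZp.
have IOz_sub A : A \in AA -> IOz \subset Iz A by exact: finset.bigcap_inf.
have gexprE A z : A \in AA -> Zp z ->
    gexpr A (prj (Iz A) z) = prj IOc (transition X psiz psic z).
  move=> AAA Zpz; have PA := fintype.subsetP AAP _ AAA.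
  rewrite /gexpr (prj_transitionE minZ minC _ _ _ PA (phic_invP A PA).2 (ZpZ _ Zpz)).
  by rewrite subproj_prj // finset.bigcap_inf.
split.
  move=> A A' AAA AAA' _ _ [z Zpz <-] [z' Zpz' <-].
  rewrite !subproj_prj ?IOz_sub // => eqzz'.
  by rewrite !gexprE //; exact: h_descends.
move=> gO gOP COp.
have gOE z : Zp z -> gO (prj IOz z) = prj IOc (transition X psiz psic z).
  move=> Zpz; have [|A [AAA [_ [[z' Zpz' <-] eqz' ->]]]] := gOP (prj IOz z).
    by exists z.
  rewrite gexprE //; apply: h_descends => //.
  by rewrite -eqz' subproj_prj ?IOz_sub.
split.
- by move=> _ [zO ZOzO <-]; exists zO.
- exact/continuous_in_subspaceT/(patch_continuous minZ minC ZpZ oZp gO gOE).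
- exact: (patch_path_connected minZ minC ZpZ oZp gO gOE cZp).
move=> Cconv cCconv oCconv CpCconv CconvC.
apply: (patch_homeo_open minZ minC AAP ZpZ oZp gO gOE _ cCconv oCconv CconvC).
move=> z Zpz.
exact/CpCconv/(Cpatch_transition minZ minC _ _ ZpZ Zpz).
Qed.
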